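(* Let $\ell,n$ be integers with $0<\ell\le n$, and let $\mathcal H$ be a set of intervals that is $\ell$-powerful in $(0,n)$ and is minimal with this property (no proper subset of $\mathcal H$ is $\ell$-powerful in $(0,n)$). Then, writing $\mathcal H=\{(a_i,b_i):1\le i\le t\}$ in standard form, we have $a_j\ge b_i-\ell+2$ for all $i,j\in\{1,\dots,t\}$ with $j\ge i+2$.
   Context: An interval is a pair $(a,b)$ of integers with $a\le b$; its length is $b-a$. An interval $(a,b)$ captures $(c,d)$ if $a\le c\le d\le b$; a set $\mathcal H$ of intervals captures $(c,d)$ if some member of $\mathcal H$ captures $(c,d)$. For integers $0<\ell\le n$, a set $\mathcal H$ of intervals is $\ell$-powerful in $(0,n)$ if $0\le a\le b\le n$ for all $(a,b)\in\mathcal H$, and $\mathcal H$ captures every interval of length $\ell$ that is captured by $(0,n)$ (i.e. every $(h,h+\ell)$ with $0\le h\le n-\ell$). A standard form of a set $\mathcal H$ of intervals is an expression $\mathcal H=\{(a_i,b_i):1\le i\le t\}$ with $t\ge 1$, $0\le a_1<a_2<\dots<a_t\le n$ and $0\le b_1<b_2<\dots<b_t\le n$; such a form exists if and only if no member of $\mathcal H$ captures another distinct member. *)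

From mathcomp Require Import all_boot all_order all_algebra.
Set Implicit Arguments. Unset Strict Implicit. Unset Printing Implicit Defensive.
Import Order.TTheory GRing.Theory Num.Theory.
Local Open Scope ring_scope.

Definition iset := int * int -> Prop.

Definition captures (I J : int * int) : Prop :=
  I.1 <= J.1 /\ J.1 <= J.2 /\ J.2 <= I.2.

Definition set_captures (H : iset) (J : int * int) : Prop :=
  exists I, H I /\ captures I J.

Definition powerful (l n : int) (H : iset) : Prop :=
  (forall I, H I -> 0 <= I.1 /\ I.1 <= I.2 /\ I.2 <= n) /\
  (forall h : int, 0 <= h -> h <= n - l -> set_captures H (h, h + l)).

Definition minimal_powerful (l n : int) (H : iset) : Prop :=
  powerful l n H /\
  forall H' : iset, (forall I, H' I -> H I) -> powerful l n H' ->
    forall I, H I -> H' I.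

Definition standard_form (n : int) (H : iset) (t : nat) (a b : nat -> int) : Prop :=
  (1 <= t)%N /\
  (forall i : nat, (1 <= i)%N -> (i < t)%N -> a i < a i.+1 /\ b i < b i.+1) /\
  0 <= a 1%N /\ a t <= n /\ 0 <= b 1%N /\ b t <= n /\
  (forall I, H I <-> exists2 i : nat, (1 <= i <= t)%N & I = (a i, b i)).

(* Minimality gives every member I of H a private window (h, h + l), captured by I and by no
other member.  In particular no member captures another, so left and right endpoints increase
together and H has a standard form.  For j >= i + 2, look at the private window (h, h + l) of
(a_(i+1), b_(i+1)): the interval (a_i, b_i) starts before h, so it must end before h + l; the
interval (a_j, b_j) ends after h + l, so it must start after h.  Hence a_j > h > b_i - l. *)
From mathcomp Require Import all_boot all_order all_algebra boolp zify.
Set Implicit Arguments. Unset Strict Implicit. Unset Printing Implicit Defensive.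
Import Order.TTheory GRing.Theory Num.Theory.
Local Open Scope ring_scope.

Definition intervals_in (n : int) (H : iset) : Prop :=
  forall I, H I -> 0 <= I.1 /\ I.1 <= I.2 /\ I.2 <= n.

Definition capture_free (H : iset) : Prop :=
  forall I J, H I -> H J -> captures I J -> I = J.

Lemma captures_trans I J K : captures I J -> captures J K -> captures I K.
Proof. by rewrite /captures; lia. Qed.

Lemma step_increasing_lt (t : nat) (f : nat -> int) :
  (forall i, (1 <= i)%N -> (i < t)%N -> f i < f i.+1) ->
  forall i j, (1 <= i)%N -> (i < j)%N -> (j <= t)%N -> f i < f j.
Proof.
move=> f_step i j i1 ij jt.
pose D := [pred k | 1 <= k <= t]%N.
have D_convex : {in D &, forall p q k, (p < k < q)%N -> k \in D}.
  by move=> p q; rewrite !inE => /andP [p1 _] /andP [_ qt] k /andP [pk kq]; apply/andP; lia.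
have f_stepD : {in D, forall k, k.+1 \in D -> f k < f k.+1}.
  by move=> k; rewrite !inE => /andP [k1 _] kt; apply: f_step.
by apply: (homo_ltn_in lt_trans D_convex f_stepD) (ij); rewrite inE; apply/andP; lia.
Qed.

Definition int_range (n : int) : seq int := [seq k%:Z | k <- iota 0 `|n|.+1].

Lemma mem_int_range n x : 0 <= n -> (x \in int_range n) = (0 <= x <= n).
Proof.
move=> n0; apply/mapP/idP => [[k] | x_in].
  by rewrite mem_iota => k_in ->; lia.
by exists `|x|%N; rewrite ?mem_iota; lia.
Qed.

Lemma sorted_int_range n : sorted <%R (int_range n).
Proof.
rewrite sorted_map; apply: sub_sorted (iota_ltn_sorted 0 _) => p q /=.
by rewrite ltz_nat.
Qed.

Section StandardForm.

Variables (n : int) (H : iset).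
Hypotheses (H_in : intervals_in n H) (H_free : capture_free H).
Hypothesis H_nonempty : exists I, H I.

Lemma capture_free_lt x y x' y' : H (x, y) -> H (x', y') -> x < x' -> y < y'.
Proof.
move=> Hxy Hxy' lt_xx'; rewrite ltNge; apply/negP => le_y'y.
have := H_in Hxy'; have := H_free Hxy Hxy'; rewrite /captures /=.
by move=> eq_xy bounds; have [] := eq_xy ltac:(lia); lia.
Qed.

Lemma capture_free_fst_inj x y y' : H (x, y) -> H (x, y') -> y = y'.
Proof.
move=> Hxy Hxy'; have := H_in Hxy; have := H_in Hxy'; rewrite /= => b' b.
have [le_yy'|lt_y'y] := lerP y y'.
  by have [] := H_free Hxy' Hxy ltac:(rewrite /captures /=; lia).
by have [] := H_free Hxy Hxy' ltac:(rewrite /captures /=; lia).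
Qed.

Let n_ge0 : 0 <= n.
Proof. by have [I /H_in] := H_nonempty; lia. Qed.

Definition left_endpoints : seq int :=
  [seq x <- int_range n | `[< exists y, H (x, y) >]].

Definition std_left (i : nat) : int := nth 0 left_endpoints i.-1.

Definition std_right (i : nat) : int :=
  nth 0 (int_range n) (find (fun y => `[< H (std_left i, y) >]) (int_range n)).

Lemma mem_left_endpoints x : x \in left_endpoints <-> exists y, H (x, y).
Proof.
rewrite mem_filter; split=> [/andP [/asboolP //] | [y Hxy]].
apply/andP; split; first by apply/asboolP; exists y.
by rewrite mem_int_range //; have := H_in Hxy; rewrite /= => bounds; apply/andP; lia.
Qed.

Lemma std_left_mem i : (1 <= i <= size left_endpoints)%N -> std_left i \in left_endpoints.
Proof. by case/andP=> i1 it; rewrite /std_left mem_nth // (leq_trans _ it) // ltn_predL. Qed.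

Lemma std_interval_mem i : (1 <= i <= size left_endpoints)%N -> H (std_left i, std_right i).
Proof.
move=> /std_left_mem /mem_left_endpoints [y Hy].
have : has (fun y => `[< H (std_left i, y) >]) (int_range n).
  apply/hasP; exists y; last exact/asboolP.
  by rewrite mem_int_range //; have := H_in Hy; rewrite /= => bounds; apply/andP; lia.
by move=> /(nth_find 0) /asboolP.
Qed.

Lemma std_left_lt i j : (1 <= i)%N -> (i < j)%N -> (j <= size left_endpoints)%N ->
  std_left i < std_left j.
Proof.
have sorted_ends : sorted <%R left_endpoints.
  exact/sorted_filter/sorted_int_range/lt_trans.
move=> i1 ij jt; apply: (@sorted_ltn_nth int _ lt_trans 0 _ sorted_ends); rewrite ?inE; lia.
Qed.

Lemma standard_form_exists : exists t a b, standard_form n H t a b.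
Proof.
pose t := size left_endpoints.
have t_ge1 : (1 <= t)%N.
  have [[x y] Hxy] := H_nonempty.
  by rewrite -has_predT; apply/hasP; exists x => //; apply/mem_left_endpoints; exists y.
have std_mem i : (1 <= i <= t)%N -> H (std_left i, std_right i) by apply: std_interval_mem.
have /= [a1_ge0 [ab1 b1_le]] := H_in (std_mem 1%N ltac:(lia)).
have /= [at_ge0 [abt bt_le]] := H_in (std_mem t ltac:(lia)).
exists t, std_left, std_right; split=> //; split.
  move=> i i1 it; have lt_i := std_left_lt i1 (ltnSn i) it.
  by split=> //; apply: capture_free_lt lt_i; apply: std_mem; lia.
do 4 (split; first lia).
move=> [x y]; split=> [Hxy | [i i_in [-> ->]]]; last exact: std_mem.
have x_in : x \in left_endpoints by apply/mem_left_endpoints; exists y.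
have i_in : (1 <= (index x left_endpoints).+1 <= t)%N by rewrite /= index_mem.
have a_i : std_left (index x left_endpoints).+1 = x by rewrite /std_left nth_index.
exists (index x left_endpoints).+1 => //.
by have := std_mem _ i_in; rewrite a_i => /(capture_free_fst_inj Hxy) <-.
Qed.

End StandardForm.

Section MinimalPowerful.

Variables (l n : int) (H : iset).
Hypothesis H_min : minimal_powerful l n H.

Lemma minimal_powerful_private_window I : H I ->
  exists h : int, [/\ 0 <= h, h <= n - l, captures I (h, h + l) &
    forall J, H J -> captures J (h, h + l) -> J = I].
Proof.
move=> HI; have [[H_in H_cover] H_minimal] := H_min.
apply: contrapT => no_window.
have shared (h : int) : 0 <= h -> h <= n - l -> captures I (h, h + l) ->
    exists J, (H J /\ J != I) /\ captures J (h, h + l).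
  move=> h0 hn cI; apply: contrapT => no_other; apply: no_window; exists h; split=> // J HJ cJ.
  by have [// | neJI] := eqVneq J I; case: no_other; exists J.
pose H' : iset := fun J => H J /\ J != I.
have H'_powerful : powerful l n H'.
  split=> [J [/H_in] // | h h0 hn].
  have [J [HJ cJ]] := H_cover h h0 hn.
  have [eqJI | neJI] := eqVneq J I; last by exists J.
  by move: cJ; rewrite eqJI; apply: shared.
by have [_] := H_minimal _ (fun J => @proj1 _ _) H'_powerful I HI; rewrite eqxx.
Qed.

Lemma minimal_powerful_capture_free : capture_free H.
Proof.
move=> I J HI HJ cIJ.
have [h [_ _ cJ J_only]] := minimal_powerful_private_window HJ.
exact: J_only HI (captures_trans cIJ cJ).
Qed.

Lemma minimal_powerful_nonempty : l <= n -> exists I, H I.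
Proof.
move=> l_le_n; have [[_ H_cover] _] := H_min.
by have [I [HI _]] := H_cover 0 (lexx 0) ltac:(lia); exists I.
Qed.

Lemma minimal_powerful_gap t a b : standard_form n H t a b ->
  forall i j, (1 <= i)%N -> (j <= t)%N -> (i.+2 <= j)%N -> b i - l + 2 <= a j.
Proof.
move=> [_ [std_step [_ [_ [_ [_ std_mem]]]]]] i j i1 jt ij.
have a_lt := step_increasing_lt (fun k k1 kt => (std_step k k1 kt).1).
have b_lt := step_increasing_lt (fun k k1 kt => (std_step k k1 kt).2).
have std_H k : (1 <= k <= t)%N -> H (a k, b k) by move=> k_in; apply/std_mem; exists k.
have [h [_ _ c_next only_next]] := minimal_powerful_private_window (std_H i.+1 ltac:(lia)).
have not_captures k : (1 <= k <= t)%N -> a k <> a i.+1 -> ~ captures (a k, b k) (h, h + l).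
  by move=> k_in ne_a /(only_next _ (std_H k k_in)) [].
have := a_lt i i.+1 i1 (ltnSn i) ltac:(lia).
have := a_lt i.+1 j ltac:(lia) ltac:(lia) jt.
have := b_lt i.+1 j ltac:(lia) ltac:(lia) jt.
have := not_captures i ltac:(lia); have := not_captures j ltac:(lia).
move: c_next; rewrite /captures /=; lia.
Qed.

End MinimalPowerful.

Theorem mainTheorem4 (l n : int) (H : iset) :
  0 < l -> l <= n -> minimal_powerful l n H ->
  (exists t a b, standard_form n H t a b) /\
  (forall (t : nat) (a b : nat -> int), standard_form n H t a b ->
     forall i j : nat, (1 <= i)%N -> (j <= t)%N -> (i.+2 <= j)%N ->
       a j >= b i - l + 2).
Proof.
move=> _ l_le_n H_min; split; last exact: minimal_powerful_gap.
have [[H_in _] _] := H_min.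
exact: standard_form_exists H_in (minimal_powerful_capture_free H_min)
  (minimal_powerful_nonempty H_min l_le_n).
Qed.
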